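(* Let $m=2^{e_1}p_2^{e_2}\cdots p_r^{e_r}$ with $e_1\ge0$, $p_j$ distinct odd primes and $e_j\ge1$, and let $m_0$ be the squarefree part of $m/2^{e_1}$. Then for every real $s>1/2$, $\mathbb E(\mathbb X_s(m))=h_m(s)$. Furthermore, \[\mathbb E(\mathbb X_\infty(m))=\frac{(-1)^{\omega(m_0)}}{m_0}\prod_{2\le j\le r,\ e_j\text{ even}}\Bigl(1-\frac2{p_j}\Bigr)\frac{a(m)}4.\]
   Context: $\omega(m_0)$ is the number of prime factors of $m_0$; $a(m)=4$ if $m$ is odd and $a(m)=2(-1)^{e_1}$ otherwise. For real $s>1/2$, $(\mathbb X_s(p))_p$ are independent random variables indexed by primes with, for odd $p$, $\mathbb P(\mathbb X_s(p)=1)=a_p(s):=\frac{p-3}{2p}+\frac{2}{p(p^s+1)}$, $\mathbb P(\mathbb X_s(p)=-1)=b_p(s):=\frac{p-1}{2p}$, $\mathbb P(\mathbb X_s(p)=0)=c_p(s):=1-a_p(s)-b_p(s)=1-\frac1p\bigl(p-2+\frac2{p^s+1}\bigr)$; and $\mathbb P(\mathbb X_s(2)=1)=\frac1{8^s+2^s+2}$, $\mathbb P(\mathbb X_s(2)=-1)=\frac12\frac{8^s-4^s+2}{8^s+2^s+2}$, $\mathbb P(\mathbb X_s(2)=0)=\frac{2^{s-1}(4^s+2^s+2)}{8^s+2^s+2}$. $(\mathbb X_\infty(p))_p$ are independent with, for odd $p$, $\mathbb P(\mathbb X_\infty(p)=1)=\frac{p-3}{2p}$, $\mathbb P(\mathbb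 X_\infty(p)=-1)=\frac{p-1}{2p}$, $\mathbb P(\mathbb X_\infty(p)=0)=\frac2p$, and $\mathbb P(\mathbb X_\infty(2)=1)=0$, $\mathbb P(\mathbb X_\infty(2)=\pm\text{}-1)=\mathbb P(\mathbb X_\infty(2)=0)=\frac12$ (i.e. $\mathbb P(\mathbb X_\infty(2)=-1)=\frac12$). Both families are extended totally multiplicatively: value $1$ at $n=1$ and $\prod_{p^e\|n}(\cdot)(p)^e$. Finally \[h_m(s)=\frac{(-1)^{\omega(m_0)}}{m_0}\,\frac{\prod_{2\le j\le r,\ e_j\text{ even}}\bigl(1-\frac2{p_j}\bigr)\bigl(1+\frac{2(p_j-1)}{(p_j-2)(p_j^s-1)}\bigr)}{\prod_{p\mid m}\bigl(1+\frac2{p^s-1}\bigr)}\,\tilde\kappa(m,s),\] where $\tilde\kappa(m,s)=1$ if $m$ is odd and $\tilde\kappa(m,s)=\frac{(-1)^{e_1}}2\frac{8^s+4^s}{8^s+2^s+2}\bigl(1+\frac{2(1+(-1)^{e_1})}{4^s(2^s-1)}\bigr)$ if $m$ is even. *)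

From HB Require Import structures.
From mathcomp Require Import all_boot all_order all_algebra.
From mathcomp Require Import all_classical all_reals all_analysis.
Set Implicit Arguments. Unset Strict Implicit. Unset Printing Implicit Defensive.
Import Order.TTheory GRing.Theory Num.Theory.
Local Open Scope ring_scope.

Section Defs.
Variable R : realType.

(* The three possible values -1, 0, 1 of X(p), indexed by 'I_3. *)
Definition val3 (v : 'I_3) : R :=
  if val v == 0%N then -1 else if val v == 1%N then 0 else 1.

(* A "law" gives, for each prime p, the distribution P(X(p) = val3 v). *)
Definition law := nat -> 'I_3 -> R.

Definition Xs_law (s : R) : law := fun p v =>
  let P := p%:R : R in
  if p == 2%N then
    let d := 8 `^ s + 2 `^ s + 2 in
    if val v == 0%N then (8 `^ s - 4 `^ s + 2) / (2 * d)
    else if val v == 1%N then 2 `^ (s - 1) * (4 `^ s + 2 `^ s + 2) / d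
    else 1 / d
  else
    let a := (P - 3) / (2 * P) + 2 / (P * (P `^ s + 1)) in
    let b := (P - 1) / (2 * P) in
    if val v == 0%N then b
    else if val v == 1%N then 1 - a - b
    else a.

Definition Xinf_law : law := fun p v =>
  let P := p%:R : R in
  if p == 2%N then
    if val v == 2%N then 0 else 1 / 2
  else
    if val v == 0%N then (P - 1) / (2 * P)
    else if val v == 1%N then 2 / P
    else (P - 3) / (2 * P).

(* Expectation of X(m) = prod_{p^e || m} X(p)^e for a family (X(p))_p of
   independent random variables with laws L p: the joint law of the
   finitely many X(p), p | m, is the product distribution, and we integrate
   X(m) against it (sum over all value assignments x of the primes of m). *)
Definition expect_mult (L : law) (m : nat) : R :=
  let ps := primes m in
  \sum_(x : {ffun 'I_(size ps) -> 'I_3})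
     (\prod_(i < size ps) L (nth 0%N ps i) (x i)) *
     (\prod_(i < size ps) val3 (x i) ^+ logn (nth 0%N ps i) m).

Definition e1 (m : nat) : nat := logn 2 m.

Definition odd_primes_oddexp (m : nat) : seq nat :=
  [seq p <- primes m | odd p && odd (logn p m)].
Definition odd_primes_evenexp (m : nat) : seq nat :=
  [seq p <- primes m | odd p && ~~ odd (logn p m)].

(* m0 = squarefree part of m / 2^e1, and omega(m0). *)
Definition m0 (m : nat) : nat := \prod_(p <- odd_primes_oddexp m) p.
Definition omega_m0 (m : nat) : nat := size (odd_primes_oddexp m).

Definition a_fun (m : nat) : R :=
  if odd m then 4 else 2 * (-1) ^+ e1 m.

Definition kappa (m : nat) (s : R) : R :=
  if odd m then 1
  else (-1) ^+ e1 m / 2 * ((8 `^ s + 4 `^ s) / (8 `^ s + 2 `^ s + 2)) *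
       (1 + 2 * (1 + (-1) ^+ e1 m) / (4 `^ s * (2 `^ s - 1))).

Definition h_fun (m : nat) (s : R) : R :=
  (-1) ^+ omega_m0 m / (m0 m)%:R *
  ((\prod_(p <- odd_primes_evenexp m)
      ((1 - 2 / p%:R) *
       (1 + 2 * (p%:R - 1) / ((p%:R - 2) * (p%:R `^ s - 1))))) /
   (\prod_(p <- primes m) (1 + 2 / (p%:R `^ s - 1)))) *
  kappa m s.

End Defs.

From HB Require Import structures.
From mathcomp Require Import all_boot all_order all_algebra.
From mathcomp Require Import all_classical all_reals all_analysis.
From mathcomp Require Import ring lra.
Import Order.TTheory GRing.Theory Num.Theory.
Local Open Scope ring_scope.

(* By independence, E X(m) is the product over p^e || m of the local moments
   E X(p)^e, and for e > 0 such a moment equals (-1)^e P(X(p) = -1) + P(X(p) = 1),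
   so it depends only on the parity of e.  For odd p it is -1/p when e is odd
   (these factors multiply to (-1)^omega(m0) / m0) and the corresponding factor
   of the claimed formula when e is even; p = 2 contributes kappa.  For X_s all
   these identities hold after multiplying by 1 + 2/(p^s - 1), the local
   factor of the denominator of h_m. *)

Lemma prod_primes_by_parity (R : comNzRingType) (G : nat -> nat -> R)
    (F2 Godd Geven : nat -> R) m :
  (0 < m)%N ->
  (forall e, (0 < e)%N -> G 2%N e = F2 e) ->
  (forall p e, prime p -> odd p -> (0 < e)%N ->
     G p e = if odd e then Godd p else Geven p) ->
  \prod_(p <- primes m) G p (logn p m) =
    \prod_(p <- odd_primes_oddexp m) Godd p *
    \prod_(p <- odd_primes_evenexp m) Geven p *
    (if odd m then 1 else F2 (e1 m)).
Proof.
move=> m_gt0 G2 Godd_p.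
have -> : (if odd m then 1 else F2 (e1 m)) =
          \prod_(p <- primes m) (if p == 2%N then F2 (logn p m) else 1).
  case: ifP => odd_m.
    rewrite big_seq big1 // => p; rewrite mem_primes => /and3P [_ _ p_dvd].
    by case: eqP p_dvd => // ->; rewrite dvdn2 odd_m.
  have two_m : (2 \in primes m)%N by rewrite mem_primes m_gt0 dvdn2 odd_m.
  rewrite (bigD1_seq 2%N two_m (primes_uniq m)) /= big1 => [|p /negPf -> //].
  by rewrite mulr1.
rewrite !big_filter !(big_mkcond (fun p => odd p && _)) -!big_split /=.
apply: eq_big_seq => p p_m; have := p_m; rewrite -logn_gt0 => e_gt0.
have p_prime : prime p by move: p_m; rewrite mem_primes => /andP [].
case: (even_prime p_prime) e_gt0 => [-> e_gt0|odd_p e_gt0].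
  by rewrite G2 //= !mul1r.
rewrite Godd_p // odd_p; case: eqP odd_p => [-> //|_ _].
by case: ifP; rewrite /= ?mulr1 ?mul1r.
Qed.

Lemma prod_sign_inv (R : fieldType) (s : seq nat) :
  \prod_(p <- s) (-1 / p%:R : R) = (-1) ^+ size s / (\prod_(p <- s) p)%:R.
Proof.
elim: s => [|p s IH]; first by rewrite !big_nil expr0 divr1.
by rewrite !big_cons IH exprS natrM invfM; ring.
Qed.

Lemma powR_gt1 (R : realType) (a x : R) : 1 < a -> 0 < x -> 1 < a `^ x.
Proof.
move=> a_gt1 x_gt0; have <- : 1 `^ x = 1 :> R by rewrite powR1.
by rewrite gt0_ltr_powR ?nnegrE //; lra.
Qed.

Lemma powR_exprn (R : realType) (a x : R) n : 0 <= a ->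
  (a `^ x) ^+ n = (a ^+ n) `^ x.
Proof.
by move=> a_ge0; rewrite -powR_mulrn ?powR_ge0 // -powRrM mulrC powRrM powR_mulrn.
Qed.

Section Moments.
Variable R : realType.
Implicit Types (L : law R) (s : R).

Definition local_moment L p e : R := \sum_(v : 'I_3) L p v * val3 R v ^+ e.

Lemma expect_mult_primes L m :
  expect_mult L m = \prod_(p <- primes m) local_moment L p (logn p m).
Proof.
rewrite /expect_mult [RHS](big_nth 0%N) big_mkord bigA_distr_bigA /=.
by apply: eq_bigr => x _; rewrite -big_split.
Qed.

Lemma local_momentE L p e : (0 < e)%N ->
  local_moment L p e = (-1) ^+ e * L p ord0 + L p ord_max.
Proof.
move=> e_gt0; rewrite /local_moment !big_ord_recr big_ord0 /= add0r /val3 /=.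
rewrite expr0n eqn0Ngt e_gt0 mulr0 addr0 expr1n mulr1 mulrC.
by congr (_ * _ + _); congr (L p _); apply: val_inj.
Qed.

Lemma local_moment_Xinf_two e : (0 < e)%N ->
  local_moment (Xinf_law R) 2 e = (-1) ^+ e / 2.
Proof. by move=> e_gt0; rewrite local_momentE // /Xinf_law /= addr0 mul1r. Qed.

Lemma local_moment_Xinf_odd p e : (2 < p)%N -> (0 < e)%N ->
  local_moment (Xinf_law R) p e = if odd e then -1 / p%:R else 1 - 2 / p%:R.
Proof.
move=> p_gt2 e_gt0; rewrite local_momentE // /Xinf_law gtn_eqF //=.
have : 3 <= p%:R :> R by rewrite (ler_nat R 3 p).
rewrite -signr_odd; case: odd => /= p_ge3; rewrite ?expr1 ?expr0.
all: by field; apply: lt0r_neq0; lra.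
Qed.

Definition kappa2 s e : R :=
  (-1) ^+ e / 2 * ((8 `^ s + 4 `^ s) / (8 `^ s + 2 `^ s + 2)) *
  (1 + 2 * (1 + (-1) ^+ e) / (4 `^ s * (2 `^ s - 1))).

Lemma kappaE m s : kappa m s = if odd m then 1 else kappa2 s (e1 m).
Proof. by []. Qed.

Lemma local_moment_Xs_two s e : 0 < s -> (0 < e)%N ->
  local_moment (Xs_law s) 2 e * (1 + 2 / (2 `^ s - 1)) = kappa2 s e.
Proof.
move=> s_gt0 e_gt0; rewrite local_momentE // /Xs_law /kappa2 /=.
have pow2_gt1 : 1 < 2 `^ s :> R by apply: powR_gt1 => //; lra.
have -> : (8 : R) = 2 ^+ 3 by rewrite !exprS expr0; lra.
have -> : (4 : R) = 2 ^+ 2 by rewrite expr2; lra.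
rewrite -!powR_exprn //.
set t := 2 `^ s in pow2_gt1 *.
rewrite -signr_odd; case: odd; rewrite ?expr1 ?expr0.
all: by field; repeat (apply/andP; split); apply: lt0r_neq0; nra.
Qed.

Lemma local_moment_Xs_odd s p e : 0 < s -> (2 < p)%N -> (0 < e)%N ->
  local_moment (Xs_law s) p e * (1 + 2 / (p%:R `^ s - 1)) =
  if odd e then -1 / p%:R
  else (1 - 2 / p%:R) * (1 + 2 * (p%:R - 1) / ((p%:R - 2) * (p%:R `^ s - 1))).
Proof.
move=> s_gt0 p_gt2 e_gt0.
rewrite local_momentE // /Xs_law gtn_eqF //=.
have p_ge3 : 3 <= p%:R :> R by rewrite (ler_nat R 3 p).
have pows_gt1 : 1 < p%:R `^ s :> R by apply: powR_gt1 => //; lra.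
set t := p%:R `^ s in pows_gt1 *; set P := p%:R : R in p_ge3 *.
rewrite -signr_odd; case: odd; rewrite ?expr1 ?expr0.
all: by field; repeat (apply/andP; split); apply: lt0r_neq0; nra.
Qed.

Lemma expect_mult_Xinf m : (0 < m)%N ->
  expect_mult (Xinf_law R) m =
    (-1) ^+ omega_m0 m / (m0 m)%:R *
    (\prod_(p <- odd_primes_evenexp m) (1 - 2 / (p%:R : R))) *
    (a_fun R m / 4).
Proof.
move=> m_gt0; rewrite expect_mult_primes.
rewrite (prod_primes_by_parity _ (local_moment (Xinf_law R))
  (fun e => (-1) ^+ e / 2) (fun p => -1 / p%:R) (fun p => 1 - 2 / p%:R)) //.
- rewrite prod_sign_inv /a_fun; congr (_ * _).
  by case: odd; field.
- exact: local_moment_Xinf_two.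
- by move=> p e p_prime odd_p; apply: local_moment_Xinf_odd; exact: odd_prime_gt2.
Qed.

Lemma expect_mult_Xs s m : 0 < s -> (0 < m)%N ->
  expect_mult (Xs_law s) m = h_fun m s.
Proof.
move=> s_gt0 m_gt0.
pose D p : R := 1 + 2 / (p%:R `^ s - 1).
have D_neq0 : {in primes m, forall p, D p != 0}.
  move=> p; rewrite mem_primes => /and3P [/prime_gt1 p_gt1 _ _].
  have pows_gt1 : 1 < p%:R `^ s by apply: powR_gt1; rewrite ?ltr1n.
  have : 0 < 2 / (p%:R `^ s - 1) by apply: divr_gt0; lra.
  by rewrite /D => ?; apply: lt0r_neq0; lra.
have -> : expect_mult (Xs_law s) m =
    \prod_(p <- primes m) (local_moment (Xs_law s) p (logn p m) * D p) /
    \prod_(p <- primes m) D p.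
  rewrite expect_mult_primes -prodf_div.
  by apply: eq_big_seq => p /D_neq0 ?; rewrite mulfK.
rewrite (prod_primes_by_parity _ (fun p e => local_moment (Xs_law s) p e * D p)
  (kappa2 s) (fun p => -1 / p%:R)
  (fun p => (1 - 2 / p%:R) * (1 + 2 * (p%:R - 1) / ((p%:R - 2) * (p%:R `^ s - 1))))) //.
- by rewrite /h_fun kappaE prod_sign_inv [in RHS]mulrA [in RHS]mulrAC.
- by move=> e; apply: local_moment_Xs_two.
- by move=> p e p_prime odd_p; apply: local_moment_Xs_odd => //; exact: odd_prime_gt2.
Qed.

End Moments.

Theorem lemma16 (R : realType) (m : nat) : (0 < m)%N ->
  (forall s : R, 1 / 2 < s -> expect_mult (Xs_law s) m = h_fun m s) /\
  expect_mult (@Xinf_law R) m =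
    (-1) ^+ omega_m0 m / (m0 m)%:R *
    (\prod_(p <- odd_primes_evenexp m) (1 - 2 / (p%:R : R))) *
    (a_fun R m / 4).
Proof.
move=> m_gt0; split; last exact: expect_mult_Xinf.
by move=> s s_gt; apply: expect_mult_Xs => //; lra.
Qed.
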